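(* The expected opinion spread $S\mapsto\sigma^o_1(S)$, viewed as a set function on subsets of $V$, is in general neither monotone nor submodular: there exist a directed graph and OI-model parameters (IC first layer) for which it is not monotone, and there exist a directed graph and OI-model parameters for which it is not submodular (i.e. there are $S\subseteq T\subseteq V$ and $x\in V$ with $\sigma^o_1(S\cup\{x\})-\sigma^o_1(S)<\sigma^o_1(T\cup\{x\})-\sigma^o_1(T)$).
   Context: OI model (IC first layer): $G=(V,E)$ is a directed graph; each node $v$ has an opinion $o_v\in[-1,1]$; each edge $(u,v)$ has an influence probability $p_{(u,v)}\in[0,1]$ and an interaction probability $\varphi_{(u,v)}\in[0,1]$. Given a seed set $S\subseteq V$, at step 0 every $s\in S$ becomes active with final opinion $o'_s=o_s$; all other nodes are inactive. At each later step, every node $u$ activated at the previous step gets one independent attempt to activate each inactive out-neighbour $v$, succeeding with probability $p_{(u,v)}$. If $u$ activates $v$, then $v$'s final opinion is $o'_v=\frac{o_v+(-1)^{\alpha}o'_u}{2}$, where independently $\alpha=0$ with probability $\varphi_{(u,v)}$ and $\alpha=1$ with probability $1-\varphi_{(u,v)}$. Active nodes stay active with fixed final opinion; the process stops when no new activations occur. Let $V_{(a)}$ be the final set of active nodes. The opinion spread is $\Gamma^o(S)=\sum_{v\in V_{(a)}\setminus S}o'_v$ (this equals the effective opinion spread with penalty $\lambda=1$), and $\sigma^o_1(S)=\mathbb{E}[\Gamma^o(S)]$. *)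

From Stdlib Require Import Reals List Arith Lra.
Import ListNotations.
Open Scope R_scope.

(* An OI-model instance (IC first layer). Nodes are 0 .. oi_n - 1.
   oi_E u v = true iff (u,v) is a directed edge. *)
Record OI := {
  oi_n   : nat;
  oi_E   : nat -> nat -> bool;
  oi_o   : nat -> R;
  oi_p   : nat -> nat -> R;
  oi_phi : nat -> nat -> R
}.

Definition oi_valid (G : OI) : Prop :=
  (forall v, (v < oi_n G)%nat -> -1 <= oi_o G v <= 1) /\
  (forall u v, (u < oi_n G)%nat -> (v < oi_n G)%nat -> oi_E G u v = true ->
     0 <= oi_p G u v <= 1 /\ 0 <= oi_phi G u v <= 1).

(* Finite discrete distributions: lists of (probability, outcome). *)
Definition dist (A : Type) := list (R * A).
Definition dret {A} (a : A) : dist A := [(1, a)].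
Definition dbind {A B} (d : dist A) (f : A -> dist B) : dist B :=
  flat_map (fun qa => map (fun rb => (fst qa * fst rb, snd rb)) (f (snd qa))) d.
Definition coin (q : R) : dist bool := [(q, true); (1 - q, false)].
Fixpoint dfold {A S} (f : S -> A -> dist S) (l : list A) (s : S) : dist S :=
  match l with
  | [] => dret s
  | x :: l' => dbind (f s x) (dfold f l')
  end.

(* Sets of nodes as boolean predicates (only nodes < n matter). *)
Definition nset := nat -> bool.
Definition nsubset (G : OI) (S T : nset) : Prop :=
  forall v, (v < oi_n G)%nat -> S v = true -> T v = true.
Definition nadd (S : nset) (x : nat) : nset := fun v => orb (S v) (Nat.eqb v x).

(* Activation map: None = inactive, Some o' = active with final opinion o'. *)
Definition amap := nat -> option R.
Definition upd (a : amap) (v : nat) (x : R) : amap :=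
  fun w => if Nat.eqb w v then Some x else a w.

(* State during a step: current activation map and the list of nodes
   activated during the current step. *)
Definition stepst := (amap * list nat)%type.

Definition attempt (G : OI) (u : nat) (s : stepst) (v : nat) : dist stepst :=
  let a := fst s in
  let ou := match a u with Some x => x | None => 0 end in
  if oi_E G u v then
    match a v with
    | Some _ => dret s
    | None =>
        dbind (coin (oi_p G u v)) (fun b =>
          if b then
            dbind (coin (oi_phi G u v)) (fun al =>
              let x := if al then (oi_o G v + ou) / 2 else (oi_o G v - ou) / 2 in
              dret (upd a v x, snd s ++ [v]))
          else dret s)
    end
  else dret s.

Definition step (G : OI) (a : amap) (fr : list nat) : dist stepst :=
  dfold (fun s u => dfold (attempt G u) (seq 0 (oi_n G)) s) fr (a, []).

Fixpoint run (G : OI) (k : nat) (a : amap) (fr : list nat) : dist amap :=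
  match k with
  | O => dret a
  | S k' =>
      match fr with
      | [] => dret a
      | _ => dbind (step G a fr) (fun s => run G k' (fst s) (snd s))
      end
  end.

Definition init_act (G : OI) (S : nset) : amap :=
  fun v => if andb (Nat.ltb v (oi_n G)) (S v) then Some (oi_o G v) else None.
Definition init_front (G : OI) (S : nset) : list nat := filter S (seq 0 (oi_n G)).

(* Final active sets: oi_n + 1 steps always suffice for the process to stop. *)
Definition final_dist (G : OI) (S : nset) : dist amap :=
  run G (Datatypes.S (oi_n G)) (init_act G S) (init_front G S).

(* Opinion spread Gamma^o(S) = sum of final opinions over V_(a) \ S. *)
Definition opinion_spread (G : OI) (S : nset) (a : amap) : R :=
  fold_right Rplus 0
    (map (fun v => if S v then 0 else match a v with Some x => x | None => 0 end)
         (seq 0 (oi_n G))).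

Definition sigma_o1 (G : OI) (S : nset) : R :=
  fold_right Rplus 0
    (map (fun qa => fst qa * opinion_spread G S (snd qa)) (final_dist G S)).

Definition monotone_sf (G : OI) (f : nset -> R) : Prop :=
  forall S T, nsubset G S T -> f S <= f T.

(* On a single edge 0 -> 1 with o_0 = 1, o_1 = 0, p = 1 and phi = 0 (the
   interaction is always negative), seeding node 0 activates node 1 with final
   opinion (0 - 1)/2 = -1/2, so sigma({0}) = -1/2 < 0 = sigma({}): adding a
   seed lowers the spread.  Once node 1 is itself a seed, node 0 has nothing
   left to influence and its marginal gain rises from -1/2 to 0, which breaks
   submodularity. *)
From Stdlib Require Import Reals List Arith Lia Lra.
Import ListNotations.
Open Scope R_scope.

Definition nset0 : nset := fun _ => false.

Lemma sum_map_eq0 (A : Type) (f : A -> R) (l : list A) :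
  (forall x, In x l -> f x = 0) -> fold_right Rplus 0 (map f l) = 0.
Proof.
  induction l as [|x l IHl]; intros Hf; simpl; [reflexivity|].
  rewrite Hf by (simpl; auto).
  rewrite IHl by (intros; apply Hf; simpl; auto); lra.
Qed.

Lemma sigma_o1_eq0 (G : OI) (S : nset) :
  (forall a, opinion_spread G S a = 0) -> sigma_o1 G S = 0.
Proof.
  intros Hspread; unfold sigma_o1; apply sum_map_eq0.
  intros qa _; rewrite Hspread; lra.
Qed.

Lemma sigma_o1_full (G : OI) (S : nset) :
  (forall v, (v < oi_n G)%nat -> S v = true) -> sigma_o1 G S = 0.
Proof.
  intros HS; apply sigma_o1_eq0; intros a; apply sum_map_eq0.
  intros v Hv; apply in_seq in Hv; rewrite HS; [reflexivity | lia].
Qed.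

Lemma sigma_o1_set0 (G : OI) : sigma_o1 G nset0 = 0.
Proof.
  (* The empty seed set has an empty frontier, so the process never starts. *)
  assert (Hfront : init_front G nset0 = []).
  { unfold init_front; induction (seq 0 (oi_n G)); auto. }
  unfold sigma_o1, final_dist; rewrite Hfront; simpl.
  unfold opinion_spread, init_act, nset0.
  rewrite sum_map_eq0; [lra|].
  intros v _; rewrite Bool.andb_false_r; reflexivity.
Qed.

Definition negative_edge : OI := {|
  oi_n := 2;
  oi_E := fun u v => andb (Nat.eqb u 0) (Nat.eqb v 1);
  oi_o := fun v => if Nat.eqb v 0 then 1 else 0;
  oi_p := fun _ _ => 1;
  oi_phi := fun _ _ => 0 |}.

Lemma negative_edge_valid : oi_valid negative_edge.
Proof.
  split.
  - intros v _; simpl; destruct (Nat.eqb v 0); lra.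
  - intros; simpl; lra.
Qed.

Ltac compute_sigma :=
  unfold sigma_o1, final_dist, opinion_spread, nadd;
  cbv -[Rplus Rmult Rminus Rdiv Ropp IZR]; lra.

Lemma sigma_negative_edge_source : sigma_o1 negative_edge (nadd nset0 0) = -1/2.
Proof. compute_sigma. Qed.

Lemma sigma_negative_edge_target : sigma_o1 negative_edge (nadd nset0 1) = 0.
Proof. compute_sigma. Qed.

Theorem lemma2 :
  (exists G : OI, oi_valid G /\ ~ monotone_sf G (sigma_o1 G)) /\
  (exists G : OI, oi_valid G /\
     exists (S T : nset) (x : nat),
       nsubset G S T /\ (x < oi_n G)%nat /\
       sigma_o1 G (nadd S x) - sigma_o1 G S < sigma_o1 G (nadd T x) - sigma_o1 G T).
Proof.
  pose proof sigma_negative_edge_source as Hsource.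
  pose proof (sigma_o1_set0 negative_edge) as Hempty.
  split; exists negative_edge; split; try exact negative_edge_valid.
  - intros Hmono.
    assert (Hsub : nsubset negative_edge nset0 (nadd nset0 0))
      by (intros v _ Hv; discriminate).
    specialize (Hmono _ _ Hsub); lra.
  - exists nset0, (nadd nset0 1), 0%nat.
    split; [intros v _ Hv; discriminate|].
    split; [simpl; lia|].
    assert (Hboth : sigma_o1 negative_edge (nadd (nadd nset0 1) 0) = 0).
    { apply sigma_o1_full; intros [|[|v]] Hv; simpl in *; auto; lia. }
    rewrite Hboth, sigma_negative_edge_target; lra.
Qed.
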